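(* For a $(w,d)$ sliding-window erasure channel with topological entropy $h_{ch}$, the zero-error capacity satisfies $1-\frac{d}{w}-h_{ch}\le C_0\le 1-\frac{d}{w}$.
   Context: Logarithms are to base $q=|\mathcal{X}|\ge2$, $\mathcal{X}$ the input alphabet. Integers $w\ge1$, $0\le d\le w$. The $(w,d)$ sliding-window erasure channel: a noise word $v(0:n-1)\in\{0,1\}^n$ is admissible if for some initial pattern $v(-w:-1)\in\{0,1\}^w$ every $w$ consecutive entries of $(v(-w),\dots,v(n-1))$ contain at most $d$ ones; output $y(t)=x(t)$ if $v(t)=0$ and $y(t)=*$ (a symbol not in $\mathcal{X}$) if $v(t)=1$. Its state graph has vertices the binary words of length $w$ with at most $d$ ones and an edge from $(b_1,\dots,b_w)$ to $(b_2,\dots,b_w,b)$ whenever the latter has at most $d$ ones; $h_{ch}=\log\lambda$ where $\lambda$ is the Perron eigenvalue of its $0/1$ adjacency matrix. A zero-error code of length $n$ is a set $\mathcal{F}\subseteq\mathcal{X}^n$ such that no output word can be produced by two distinct codewords under admissible noise; $C_0=\sup_n\sup_{\mathcal{F}}\log|\mathcal{F}|/n$. *)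

From Stdlib Require Import Reals Lra Lia List Bool Arith.
Import ListNotations.
Open Scope R_scope.

Definition ones (l : list bool) : nat := length (filter (fun b => b) l).

Fixpoint all_words (w : nat) : list (list bool) :=
  match w with
  | O => [[]]
  | S w' => flat_map (fun l => [false :: l; true :: l]) (all_words w')
  end.

Definition states (w d : nat) : list (list bool) :=
  filter (fun l => Nat.leb (ones l) d) (all_words w).

(** 0/1 adjacency entry: edge from (b1,...,bw) to (b2,...,bw,b).
    Used only for x, y among [states w d] (so the target has at most d ones). *)
Definition adj (x y : list bool) : R :=
  if list_eq_dec bool_dec y (tl x ++ [false]) then 1
  else if list_eq_dec bool_dec y (tl x ++ [true]) then 1 else 0.

Definition sumR {A : Type} (l : list A) (f : A -> R) : R :=
  fold_right (fun a acc => f a + acc) 0 l.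

(** (a + i b) is a (complex) eigenvalue of the adjacency matrix of the state
    graph, with complex eigenvector u + i v (u, v real vectors indexed by the
    vertices). *)
Definition is_eigenvalue (w d : nat) (a b : R) : Prop :=
  exists u v : list bool -> R,
    (exists x, In x (states w d) /\ (u x <> 0 \/ v x <> 0)) /\
    forall x, In x (states w d) ->
      sumR (states w d) (fun y => adj x y * u y) = a * u x - b * v x /\
      sumR (states w d) (fun y => adj x y * v y) = b * u x + a * v x.

(** Perron eigenvalue: the nonnegative real eigenvalue equal to the spectral
    radius (every complex eigenvalue has modulus at most lam). *)
Definition is_perron (w d : nat) (lam : R) : Prop :=
  0 <= lam /\ is_eigenvalue w d lam 0 /\
  forall a b, is_eigenvalue w d a b -> sqrt (a * a + b * b) <= lam.

Definition logq (q : nat) (x : R) : R := ln x / ln (INR q).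

Definition admissible (w d n : nat) (v : list bool) : Prop :=
  length v = n /\
  exists init : list bool, length init = w /\
    forall i, (i <= n)%nat -> (ones (firstn w (skipn i (init ++ v))) <= d)%nat.

(** Channel output: None stands for the erasure symbol *. *)
Definition output (x : list nat) (v : list bool) : list (option nat) :=
  map (fun p : nat * bool => if snd p then None else Some (fst p)) (combine x v).

Definition zero_error_code (q w d n : nat) (F : list (list nat)) : Prop :=
  NoDup F /\
  (forall c, In c F -> length c = n /\ Forall (fun a => (a < q)%nat) c) /\
  (forall c1 c2 v1 v2, In c1 F -> In c2 F ->
      admissible w d n v1 -> admissible w d n v2 ->
      output c1 v1 = output c2 v2 -> c1 = c2).

Definition rates (q w d : nat) (r : R) : Prop :=
  exists (n : nat) (F : list (list nat)),
    (1 <= n)%nat /\ (1 <= length F)%nat /\ zero_error_code q w d n F /\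
    r = logq q (INR (length F)) / INR n.

From Stdlib Require Import Reals Lra Lia List Bool Arith Classical.
Import ListNotations.
Open Scope R_scope.
From mathcomp Require all_boot all_order all_algebra Rstruct.
Set Warnings "-notation-overridden,-ambiguous-paths".

(* Upper bound: the periodic noise word erasing the first d symbols of every
   block of w is admissible, so a zero-error code is injective into the
   q^(#unerased) outputs of that single pattern, whence |F| <= q^(n (1 - d/w)).

   Lower bound: a greedy (Gilbert-Varshamov) code of length n = k w keeps a word
   unless it is confusable with an earlier codeword, i.e. agrees with it off the
   erasures of some admissible noise word.  Every word is then confusable with a
   codeword, and a codeword is confusable with at most V q^(k d) words, V being
   the number of admissible noise words; so |F| >= q^n / (V q^(k d)).  V is a
   sum of walk counts T n in the state graph, and their growth rate is at most
   lam: if r = exp (inf_m ln (T m) / m), either r is a real eigenvalue (so r <= lam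
   by maximality of the Perron eigenvalue) or A - r is invertible; in the latter
   case the inverse applied to the truncated resolvent sum_(n<N) A^n 1 / r^n shows
   that T N / r^N dominates a fixed fraction of its partial sums, hence grows
   exponentially, contradicting the definition of r. *)

Section ListSums.
Context {A : Type}.

Lemma sumR_ext (l : list A) f g :
  (forall x, In x l -> f x = g x) -> sumR l f = sumR l g.
Proof.
induction l as [|a l IH]; intros H; simpl; [reflexivity|].
rewrite H, IH; auto with datatypes.
Qed.

Lemma sumR_plus (l : list A) f g :
  sumR l (fun x => f x + g x) = sumR l f + sumR l g.
Proof. induction l; simpl; [lra|rewrite IHl; lra]. Qed.

Lemma sumR_scal (l : list A) c f : sumR l (fun x => c * f x) = c * sumR l f.
Proof. induction l; simpl; [lra|rewrite IHl; lra]. Qed.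

Lemma sumR_le (l : list A) f g :
  (forall x, In x l -> f x <= g x) -> sumR l f <= sumR l g.
Proof.
induction l as [|a l IH]; intros H; simpl; [lra|].
assert (f a <= g a) by auto with datatypes.
assert (sumR l f <= sumR l g) by (apply IH; auto with datatypes).
lra.
Qed.

Lemma sumR_nonneg (l : list A) f : (forall x, In x l -> 0 <= f x) -> 0 <= sumR l f.
Proof.
intros H; replace 0 with (sumR l (fun _ => 0)) by (clear H; induction l; simpl; lra).
apply sumR_le; auto.
Qed.

Lemma sumR_term (l : list A) f a :
  (forall x, In x l -> 0 <= f x) -> In a l -> f a <= sumR l f.
Proof.
induction l as [|b l IH]; intros H Ha; simpl; [destruct Ha|].
assert (0 <= f b) by auto with datatypes.
assert (0 <= sumR l f) by (apply sumR_nonneg; auto with datatypes).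
destruct Ha as [<-|Ha]; [lra|].
assert (f a <= sumR l f) by (apply IH; auto with datatypes).
lra.
Qed.

Lemma sumR_indicator (eq_dec : forall x y : A, {x = y} + {x <> y}) (l : list A) a g :
  NoDup l -> sumR l (fun y => if eq_dec y a then g y else 0) =
  if in_dec eq_dec a l then g a else 0.
Proof.
induction l as [|b l IH]; intros Hnd; simpl; [reflexivity|].
inversion Hnd; subst; rewrite IH by assumption.
destruct (eq_dec b a) as [->|Hba].
- destruct (in_dec eq_dec a l); [contradiction|lra].
- destruct (in_dec eq_dec a l); lra.
Qed.
End ListSums.

Lemma INR_list_sum {X : Type} (h : X -> nat) (l : list X) :
  INR (list_sum (map h l)) = sumR l (fun x => INR (h x)).
Proof. induction l; simpl; auto. rewrite plus_INR, IHl; reflexivity. Qed.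

Fixpoint psum (N : nat) (g : nat -> R) : R :=
  match N with O => 0 | S N => psum N g + g N end.

Lemma sumR_psum {A : Type} (l : list A) N F :
  sumR l (fun x => psum N (fun n => F n x)) = psum N (fun n => sumR l (F n)).
Proof.
induction N; simpl.
- induction l; simpl; auto; lra.
- rewrite sumR_plus, IHN; reflexivity.
Qed.

Lemma psum_ext N f g : (forall n, (n < N)%nat -> f n = g n) -> psum N f = psum N g.
Proof. induction N; intros H; simpl; auto. rewrite IHN, H; auto. Qed.

Lemma psum_scal N c f : psum N (fun n => c * f n) = c * psum N f.
Proof. induction N; simpl; [lra|rewrite IHN; lra]. Qed.

Lemma psum_nonneg N (a : nat -> R) : (forall n, 0 <= a n) -> 0 <= psum N a.
Proof. intros H; induction N; simpl; [lra|]. specialize (H N). lra. Qed.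

Lemma psum_ge N (a : nat -> R) : (forall n, 1 <= a n) -> INR N <= psum N a.
Proof.
intros H; induction N; [simpl; lra|]. rewrite S_INR; simpl. specialize (H N). lra.
Qed.

Lemma psum_term N (a : nat -> R) j :
  (forall n, 0 <= a n) -> (j < N)%nat -> a j <= psum N a.
Proof.
intros H; induction N; intros Hj; [lia|]; simpl.
destruct (Nat.eq_dec j N) as [->|Hne].
- assert (0 <= psum N a) by (apply psum_nonneg; auto). lra.
- assert (a j <= psum N a) by (apply IHN; lia). specialize (H N). lra.
Qed.

Lemma ln_le x y : 0 < x -> x <= y -> ln x <= ln y.
Proof. intros Hx [H|H]; [left; apply ln_increasing; auto|subst; lra]. Qed.

Lemma ln_le_inv x y : 0 < x -> 0 < y -> ln x <= ln y -> x <= y.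
Proof.
intros Hx Hy H; destruct (Rle_dec x y) as [|Hn]; auto.
assert (ln y < ln x) by (apply ln_increasing; lra). lra.
Qed.

(** * The state graph and admissible noise words *)

Lemma all_words_In n l : In l (all_words n) <-> length l = n.
Proof.
revert l; induction n as [|n IH]; intros l; simpl.
- split; [intros [<-|[]]; reflexivity|destruct l; simpl; [auto|discriminate]].
- rewrite in_flat_map; split.
  + intros [l' [Hl' Hin]]; apply IH in Hl'.
    destruct Hin as [<-|[<-|[]]]; simpl; lia.
  + intros H; destruct l as [|b l]; [discriminate|]; simpl in H.
    exists l; split; [apply IH; lia|]. destruct b; simpl; auto.
Qed.

Lemma NoDup_all_words n : NoDup (all_words n).
Proof.
induction n as [|n IH]; simpl; [constructor; [simpl; auto|constructor]|].
induction IH as [|a L Ha HL IHL]; simpl; [constructor|].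
constructor; [|constructor; [|exact IHL]].
- intros [H|H]; [discriminate|].
  apply in_flat_map in H; destruct H as [l [Hl [Hin|[Hin|[]]]]];
    [injection Hin; intros; subst; auto|discriminate].
- intros H; apply in_flat_map in H; destruct H as [l [Hl [Hin|[Hin|[]]]]];
    [discriminate|injection Hin; intros; subst; auto].
Qed.

Lemma states_In w d x : In x (states w d) <-> length x = w /\ (ones x <= d)%nat.
Proof. unfold states; rewrite filter_In, all_words_In, Nat.leb_le; tauto. Qed.

Lemma NoDup_states w d : NoDup (states w d).
Proof. apply NoDup_filter, NoDup_all_words. Qed.

Lemma ones_app l1 l2 : ones (l1 ++ l2) = (ones l1 + ones l2)%nat.
Proof. unfold ones; rewrite filter_app, length_app; reflexivity. Qed.

Lemma ones_repeat_false n : ones (repeat false n) = 0%nat.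
Proof. induction n; simpl; auto. Qed.

Lemma ones_map (p : nat -> bool) l : ones (map p l) = length (filter p l).
Proof. induction l; unfold ones in *; simpl; auto. destruct (p a); simpl; auto. Qed.

Lemma repeat_false_state w d : In (repeat false w) (states w d).
Proof. apply states_In; split; [apply repeat_length|rewrite ones_repeat_false; lia]. Qed.

Definition step (x : list bool) (b : bool) : list bool := tl x ++ [b].

(** [valid_from d x v]: starting from the window [x], every window met while
    reading [v] has at most [d] ones, i.e. [v] is a walk in the state graph. *)
Fixpoint valid_from (d : nat) (x v : list bool) : bool :=
  match v with
  | [] => true
  | b :: v' => Nat.leb (ones (step x b)) d && valid_from d (step x b) v'
  end.

Fixpoint run (x v : list bool) : list bool :=
  match v with [] => x | b :: v' => run (step x b) v' end.

Lemma length_step x b : (1 <= length x)%nat -> length (step x b) = length x.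
Proof. unfold step; destruct x; simpl; rewrite ?length_app; simpl; lia. Qed.

Lemma valid_from_windows w d (hw : (1 <= w)%nat) v : forall x, length x = w ->
  (forall i, (i <= length v)%nat -> (ones (firstn w (skipn i (x ++ v))) <= d)%nat) ->
  valid_from d x v = true.
Proof.
induction v as [|b v IH]; intros x Hx H; simpl; [reflexivity|].
destruct x as [|a x]; [simpl in Hx; lia|].
assert (Hs : step (a :: x) b = firstn w (skipn 1 ((a :: x) ++ b :: v))).
{ simpl; unfold step; simpl; rewrite firstn_app.
  simpl in Hx; replace (w - length x)%nat with 1%nat by lia.
  rewrite (firstn_all2 (n:=w) x) by lia; reflexivity. }
apply andb_true_intro; split.
- apply Nat.leb_le; rewrite Hs; apply H; simpl; lia.
- apply IH; [rewrite length_step; [assumption|simpl; lia]|].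
  intros i Hi; specialize (H (S i)); simpl in H.
  unfold step; simpl; rewrite <- app_assoc; simpl; apply H; lia.
Qed.

Lemma admissible_valid_from w d n v (hw : (1 <= w)%nat) : admissible w d n v ->
  exists s, In s (states w d) /\ valid_from d s v = true.
Proof.
intros [Hlen [init [Hi H]]]; exists init; split.
- apply states_In; split; auto.
  specialize (H 0%nat (Nat.le_0_l _)); simpl in H.
  rewrite firstn_app, firstn_all2, ones_app in H by lia; lia.
- apply (valid_from_windows w); auto. intros i Hle; apply H; lia.
Qed.

Lemma valid_from_app d x u v :
  valid_from d x (u ++ v) = valid_from d x u && valid_from d (run x u) v.
Proof.
revert x; induction u as [|b u IH]; intros x; simpl; [reflexivity|].
rewrite IH, andb_assoc; reflexivity.
Qed.

Lemma run_skipn u : forall x, (length u < length x)%nat ->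
  run x u = skipn (length u) x ++ u.
Proof.
induction u as [|b u IH]; intros x Hx; simpl; [rewrite app_nil_r; reflexivity|].
destruct x as [|a x]; simpl in Hx; [lia|].
rewrite IH by (unfold step; simpl; rewrite length_app; simpl; lia).
unfold step; simpl; rewrite skipn_app.
replace (length u - length x)%nat with 0%nat by lia; simpl.
rewrite <- app_assoc; reflexivity.
Qed.

Lemma run_full x u : (1 <= length x)%nat -> length u = length x -> run x u = u.
Proof.
intros H1 H; destruct u as [|b u]; simpl in *; [lia|].
destruct x as [|a x]; simpl in *; [lia|].
unfold step; simpl; rewrite run_skipn by (rewrite length_app; simpl; lia).
rewrite skipn_app, skipn_all2 by lia.
replace (length u - length x)%nat with 0%nat by lia; reflexivity.
Qed.

Lemma valid_from_run_ones d u : forall x, u <> [] -> valid_from d x u = true ->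
  (ones (run x u) <= d)%nat.
Proof.
induction u as [|b u IH]; intros x Hu H; [congruence|].
simpl in H; apply andb_prop in H; destruct H as [H1 H2].
destruct u as [|b' u]; [simpl; apply Nat.leb_le; assumption|].
apply IH; [discriminate|assumption].
Qed.

Lemma valid_from_ones w d (hw : (1 <= w)%nat) k : forall v x, length x = w ->
  length v = (k * w)%nat -> valid_from d x v = true -> (ones v <= k * d)%nat.
Proof.
induction k as [|k IH]; intros v x Hx Hv H.
- destruct v; [unfold ones; simpl; lia|simpl in Hv; lia].
- rewrite <- (firstn_skipn w v) in H |- *.
  rewrite valid_from_app in H; apply andb_prop in H; destruct H as [H1 H2].
  assert (Hu : length (firstn w v) = w) by (rewrite length_firstn; lia).
  rewrite run_full in H2 by lia.
  assert (ones (firstn w v) <= d)%nat.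
  { rewrite <- (run_full x (firstn w v)) by lia.
    apply valid_from_run_ones; auto. intros E; rewrite E in Hu; simpl in Hu; lia. }
  assert (ones (skipn w v) <= k * d)%nat
    by (apply (IH _ (firstn w v)); auto; rewrite length_skipn; lia).
  rewrite ones_app; lia.
Qed.

Lemma valid_from_repeat_false w d (hw : (1 <= w)%nat) n :
  valid_from d (repeat false w) (repeat false n) = true.
Proof.
induction n as [|n IH]; simpl; [reflexivity|].
assert (E : step (repeat false w) false = repeat false w).
{ destruct w as [|w]; [lia|]. unfold step; simpl; rewrite <- repeat_cons; reflexivity. }
rewrite E, ones_repeat_false, IH; reflexivity.
Qed.

Definition nwalks (d : nat) (x : list bool) (n : nat) : nat :=
  length (filter (valid_from d x) (all_words n)).

Lemma nwalks_S d x n : nwalks d x (S n) =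
  ((if Nat.leb (ones (step x false)) d then nwalks d (step x false) n else 0) +
   (if Nat.leb (ones (step x true)) d then nwalks d (step x true) n else 0))%nat.
Proof.
unfold nwalks; simpl.
assert (Hand : forall (c : bool) (P : list bool -> bool) L,
  length (filter (fun l => c && P l) L) = if c then length (filter P L) else 0%nat).
{ intros [] P L; simpl; [reflexivity|induction L; simpl; auto]. }
rewrite <- (Hand (Nat.leb (ones (step x false)) d) (valid_from d (step x false))).
rewrite <- (Hand (Nat.leb (ones (step x true)) d) (valid_from d (step x true))).
induction (all_words n) as [|l L IH]; simpl; [reflexivity|].
destruct (Nat.leb (ones (step x false)) d && valid_from d (step x false) l);
destruct (Nat.leb (ones (step x true)) d && valid_from d (step x true) l); simpl;
rewrite IH; lia.
Qed.

Lemma nwalks_repeat_false_pos w d (hw : (1 <= w)%nat) n : (1 <= nwalks d (repeat false w) n)%nat.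
Proof.
unfold nwalks.
assert (H : In (repeat false n) (filter (valid_from d (repeat false w)) (all_words n))).
{ apply filter_In; split; [apply all_words_In, repeat_length|apply valid_from_repeat_false; auto]. }
destruct (filter (valid_from d (repeat false w)) (all_words n)); [destruct H|simpl; lia].
Qed.

Lemma adj_ge0 x y : 0 <= adj x y.
Proof. unfold adj; repeat destruct (list_eq_dec _ _ _); lra. Qed.

Lemma sumR_adj w d (hw : (1 <= w)%nat) x g : length x = w ->
  sumR (states w d) (fun y => adj x y * g y) =
  (if Nat.leb (ones (step x false)) d then g (step x false) else 0) +
  (if Nat.leb (ones (step x true)) d then g (step x true) else 0).
Proof.
intros Hx.
assert (Hne : step x false <> step x true)
  by (unfold step; intros E; apply app_inj_tail in E; destruct E; discriminate).
rewrite (sumR_ext _ _ (fun y =>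
   (if list_eq_dec bool_dec y (step x false) then g y else 0) +
   (if list_eq_dec bool_dec y (step x true) then g y else 0))).
2:{ intros y _; unfold adj; fold (step x false) (step x true).
    destruct (list_eq_dec bool_dec y (step x false)) as [->|H1];
    destruct (list_eq_dec bool_dec (step x false) (step x true)); try congruence.
    - destruct (list_eq_dec bool_dec (step x false) (step x true)); [congruence|lra].
    - destruct (list_eq_dec bool_dec y (step x true)); lra. }
rewrite sumR_plus, !sumR_indicator by apply NoDup_states.
assert (Hin : forall b, In (step x b) (states w d) <-> (ones (step x b) <= d)%nat).
{ intros b; rewrite states_In, length_step by lia; intuition. }
f_equal; [set (b := false)|set (b := true)];
  destruct (in_dec (list_eq_dec bool_dec) (step x b) (states w d)) as [Hi|Hi];
  destruct (Nat.leb (ones (step x b)) d) eqn:E; auto;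
  [apply Hin, Nat.leb_le in Hi|apply Nat.leb_le, Hin in E|
   apply Hin, Nat.leb_le in Hi|apply Nat.leb_le, Hin in E]; congruence.
Qed.

(** * Real eigenvectors or a bounded inverse *)

Definition mx_apply (st : list (list bool)) (B : list bool -> list bool -> R)
  (f : list bool -> R) (x : list bool) : R := sumR st (fun y => B x y * f y).

Definition norm1 (st : list (list bool)) (f : list bool -> R) : R :=
  sumR st (fun x => Rabs (f x)).

Definition real_eigvec (st : list (list bool)) (B : list bool -> list bool -> R)
  (r : R) (f : list bool -> R) : Prop :=
  (exists x, In x st /\ f x <> 0) /\
  forall x, In x st -> mx_apply st B f x = r * f x.

Definition inverse_bound (st : list (list bool)) (B : list bool -> list bool -> R)
  (r K : R) : Prop :=
  forall f, norm1 st f <= K * norm1 st (fun x => mx_apply st B f x - r * f x).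

Module EigenAlternative.
Import all_boot all_order all_algebra Rstruct.
Import GRing.Theory Num.Theory Order.TTheory.
Local Open Scope ring_scope.

Lemma In_mem (x : list bool) (l : list (list bool)) : In x l <-> x \in l.
Proof.
elim: l => [|a l IH] //=; rewrite in_cons; split.
- by case=> [->|/IH ->]; rewrite ?eqxx ?orbT.
- by case/orP=> [/eqP ->|/IH]; [left | right].
Qed.

Lemma NoDup_uniq (l : list (list bool)) : NoDup l -> uniq l.
Proof.
elim: l => [|a l IH] //= H; inversion H; subst.
by apply/andP; split; [apply/negP => /In_mem | apply: IH].
Qed.

Definition sub_scalar_mx (st : list (list bool)) (B : list bool -> list bool -> R) (r : R) :
  'M[R]_(size st) :=
  \matrix_(i, j) (B (nth [::] st i) (nth [::] st j) - (if i == j then r else 0)).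

Section Alternative.
Variables (st : list (list bool)) (B : list bool -> list bool -> R) (r : R).
Hypothesis st_uniq : uniq st.
Let s (i : 'I_(size st)) := nth [::] st i.
Let M := sub_scalar_mx st B r.

Lemma mul_row_sub_scalar_mx (z : 'rV[R]_(size st)) i :
  (z *m M^T) 0 i = \sum_j B (s i) (s j) * z 0 j - r * z 0 i.
Proof.
rewrite !mxE; under eq_bigr => j _ do rewrite !mxE mulrBr.
rewrite sumrB; congr (_ - _); first by apply: eq_bigr => j _; rewrite mulrC.
rewrite (bigD1 i) //= eqxx big1 ?addr0; first by rewrite mulrC.
by move=> j /negbTE; rewrite eq_sym => ->; rewrite mulr0.
Qed.

Lemma sumR_ord (g : list bool -> R) : sumR st g = \sum_i g (s i).
Proof.
have -> : sumR st g = \sum_(x <- st) g x.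
  by elim: st => [|a l IH] /=; rewrite ?big_nil // big_cons IH.
by rewrite (big_nth [::]) big_mkord.
Qed.

Lemma singular_real_eigvec : \det M^T == 0 -> exists f, real_eigvec st B r f.
Proof.
case/det0P=> v vn0 vM.
have s_inj i j : s i = s j -> i = j.
  move=> Hij; apply: val_inj; apply/eqP.
  by rewrite -(nth_uniq [::] (ltn_ord i) (ltn_ord j) st_uniq); apply/eqP.
pose f y := \sum_j (if s j == y then v 0 j else 0).
have fs i : f (s i) = v 0 i.
  rewrite /f (bigD1 i) //= eqxx big1 ?addr0 // => j /negbTE ji.
  by case: eqP => // /s_inj eji; rewrite eji eqxx in ji.
exists f; split.
  case/boolP: [exists i, v 0 i != 0] => [/existsP [i vi] | /existsPn H].
    exists (s i); split; first by apply/In_mem; rewrite /s mem_nth.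
    by rewrite fs; apply/eqP.
  exfalso; move/eqP: vn0; apply; apply/matrixP => a b.
  by rewrite ord1 !mxE; move: (H b); rewrite negbK => /eqP.
move=> x /In_mem xin.
have hi : (index x st < size st)%N by rewrite index_mem.
have <- : s (Ordinal hi) = x by rewrite /s /= nth_index.
rewrite /mx_apply sumR_ord fs.
have := mul_row_sub_scalar_mx v (Ordinal hi).
rewrite vM mxE => /esym /eqP; rewrite subr_eq0 => /eqP Ev.
by rewrite -[RHS]/(r * v 0 _) -Ev; apply: eq_bigr => j _; rewrite fs.
Qed.

Lemma regular_inverse_bound : \det M^T != 0 -> exists K, inverse_bound st B r K.
Proof.
move=> detn0; have uM : M^T \in unitmx by rewrite unitmxE unitfE.
pose N := invmx M^T.
pose K0 := \sum_i \sum_j `|N i j|.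
have NK i j : `|N i j| <= K0.
  rewrite /K0 (bigD1 i) //= (bigD1 j) //= -addrA lerDl.
  by rewrite addr_ge0 // sumr_ge0 // => k _; rewrite ?sumr_ge0.
exists ((size st)%:R * K0) => f.
pose z : 'rV[R]_(size st) := \row_j f (s j).
pose y := z *m M^T.
have zy : z = y *m N by rewrite /y /N mulmxK.
have -> : norm1 st f = \sum_j `|z 0 j|.
  by rewrite /norm1 sumR_ord; apply: eq_bigr => j _; rewrite mxE.
have -> : norm1 st (fun x => mx_apply st B f x - r * f x) = \sum_i `|y 0 i|.
  rewrite /norm1 sumR_ord; apply: eq_bigr => i _.
  rewrite /y mul_row_sub_scalar_mx /mx_apply sumR_ord mxE.
  by congr (`| _ - _ * _|); apply: eq_bigr => j _; rewrite mxE.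
apply/RleP.
have z_bound j : `|z 0 j| <= K0 * \sum_i `|y 0 i|.
  rewrite zy mxE (le_trans (ler_norm_sum _ _ _)) //.
  rewrite mulr_sumr; apply: ler_sum => i _; rewrite normrM mulrC.
  by rewrite ler_wpM2r.
apply: (le_trans (ler_sum _ (fun j _ => z_bound j))).
by rewrite sumr_const card_ord -[_ *+ size st]mulr_natl mulrA.
Qed.
End Alternative.

Lemma real_eigvec_or_inverse_bound (st : list (list bool)) (B : list bool -> list bool -> R)
  (r : R) : NoDup st ->
  (exists f, real_eigvec st B r f) \/ exists K, inverse_bound st B r K.
Proof.
move=> /NoDup_uniq Hnd; case: (boolP (\det (sub_scalar_mx st B r)^T == 0)).
- by left; apply: singular_real_eigvec.
- by right; apply: regular_inverse_bound.
Qed.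
End EigenAlternative.

(** * Growth rate of walk counts *)

Lemma inf_log_growth (u : nat -> R) : (forall n, 1 <= u n) ->
  exists l, 0 <= l /\ (forall m, (1 <= m)%nat -> l <= ln (u m) / INR m) /\
    forall eps, 0 < eps -> exists m, (1 <= m)%nat /\ ln (u m) / INR m < l + eps.
Proof.
intros Hu.
set (E := fun y => forall m, (1 <= m)%nat -> y <= ln (u m) / INR m).
assert (HE0 : E 0).
{ intros m Hm; apply Rmult_le_pos.
  - rewrite <- ln_1; apply ln_le; [lra|apply Hu].
  - left; apply Rinv_0_lt_compat, lt_0_INR; lia. }
assert (HEb : bound E) by (exists (ln (u 1%nat) / INR 1); intros y Hy; apply Hy; lia).
destruct (completeness E HEb (ex_intro _ 0 HE0)) as [l [Hub Hlub]].
exists l; split; [apply Hub, HE0|split].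
- intros m Hm; apply Hlub; intros y Hy; apply Hy, Hm.
- intros eps Heps.
  destruct (classic (exists m, (1 <= m)%nat /\ ln (u m) / INR m < l + eps)) as [H|H];
    auto.
  assert (E (l + eps)).
  { intros m Hm; destruct (Rle_dec (l + eps) (ln (u m) / INR m)) as [|Hn]; auto.
    exfalso; apply H; exists m; split; auto; lra. }
  specialize (Hub _ H0); lra.
Qed.

(** A nonnegative sequence that eventually dominates the fraction [c] of its
    partial sums grows like [(1 + c) ^ N], so it is not [O(rho ^ N)] for any
    [rho < 1 + c]. *)
Lemma partial_sum_domination_growth (a : nat -> R) (c Mx rho : R) (N0 : nat) :
  (forall n, 0 <= a n) -> 0 < c ->
  (forall N, (N0 <= N)%nat -> c * psum N a <= a N) -> 1 <= psum N0 a ->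
  (forall N, a N <= Mx * rho ^ N) -> 1 <= rho -> rho < 1 + c -> False.
Proof.
intros Ha Hc Hg HP Hup Hr1 Hr2.
assert (Hk : forall k, (1 + c) ^ k <= psum (N0 + k) a).
{ induction k as [|k IH]; [rewrite Nat.add_0_r; simpl; lra|].
  replace (N0 + S k)%nat with (S (N0 + k)) by lia; simpl.
  specialize (Hg (N0 + k)%nat ltac:(lia)).
  assert (0 < (1 + c) ^ k) by (apply pow_lt; lra). nra. }
set (beta := (1 + c) / rho).
assert (Hb : 1 < beta).
{ unfold beta; apply (Rmult_lt_reg_r rho); [lra|].
  unfold Rdiv; rewrite Rmult_assoc, Rinv_l by lra; lra. }
assert (Hbk : forall k, c * beta ^ k <= Mx * rho ^ N0).
{ intros k; specialize (Hk k); specialize (Hg (N0 + k)%nat ltac:(lia)).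
  specialize (Hup (N0 + k)%nat); rewrite pow_add in Hup.
  unfold beta, Rdiv; rewrite Rpow_mult_distr, pow_inv.
  assert (0 < rho ^ k) by (apply pow_lt; lra).
  assert (c * (1 + c) ^ k <= Mx * rho ^ N0 * rho ^ k) by nra.
  apply (Rmult_le_reg_r (rho ^ k)); [assumption|].
  replace (c * ((1 + c) ^ k * / rho ^ k) * rho ^ k) with (c * (1 + c) ^ k)
    by (field; lra). lra. }
destruct (INR_unbounded ((Mx * rho ^ N0) / (c * (beta - 1)))) as [k Hkk].
specialize (Hbk k).
assert (HB := poly k (beta - 1) ltac:(lra)).
replace (1 + (beta - 1)) with beta in HB by ring.
assert (Hcb : 0 < c * (beta - 1)) by (apply Rmult_lt_0_compat; lra).
apply (Rmult_lt_compat_r (c * (beta - 1))) in Hkk; [|assumption].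
unfold Rdiv in Hkk; rewrite Rmult_assoc, Rinv_l in Hkk by lra.
assert (0 <= INR k) by apply pos_INR.
nra.
Qed.

Section WalkGrowth.
Variable st : list (list bool).
Variable B : list bool -> list bool -> R.
Variable W : nat -> list bool -> R.
Hypothesis B_ge0 : forall x y, 0 <= B x y.
Hypothesis W_ge0 : forall n x, 0 <= W n x.
Hypothesis W_0 : forall x, In x st -> W 0%nat x = 1.
Hypothesis W_S : forall n x, In x st -> W (S n) x = mx_apply st B (W n) x.
Hypothesis T_ge1 : forall n, 1 <= sumR st (W n).

Let T n := sumR st (W n).

Lemma W_add_le m : forall n x, In x st -> W (n + m)%nat x <= T m * W n x.
Proof.
induction n as [|n IH]; intros x Hx; simpl.
- rewrite W_0, Rmult_1_r by assumption; apply sumR_term; auto.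
- rewrite !W_S by assumption; unfold mx_apply; rewrite <- sumR_scal.
  apply sumR_le; intros y Hy; specialize (IH y Hy); specialize (B_ge0 x y); nra.
Qed.

Lemma T_add_le n m : T (n + m)%nat <= T n * T m.
Proof.
unfold T at 1; apply Rle_trans with (sumR st (fun x => T m * W n x)).
- apply sumR_le; intros x Hx; apply W_add_le; auto.
- rewrite sumR_scal; unfold T; lra.
Qed.

Lemma T_pos n : 0 < T n.
Proof. specialize (T_ge1 n); unfold T; lra. Qed.

Lemma T_mul_add_le m k j : T (k * m + j)%nat <= T m ^ k * T j.
Proof.
induction k as [|k IH]; simpl; [lra|].
replace (m + k * m + j)%nat with (m + (k * m + j))%nat by lia.
eapply Rle_trans; [apply T_add_le|].
assert (0 < T m) by apply T_pos. nra.
Qed.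

Lemma inverse_bound_pos r K : inverse_bound st B r K -> 0 < K.
Proof.
intros HK; specialize (HK (fun _ => 1)).
assert (Hn1 : norm1 st (fun _ => 1) = T 0%nat).
{ unfold norm1, T; apply sumR_ext; intros x Hx; rewrite W_0, Rabs_R1; auto. }
assert (0 <= norm1 st (fun x => mx_apply st B (fun _ => 1) x - r * 1))
  by (apply sumR_nonneg; intros; apply Rabs_pos).
assert (1 <= T 0%nat) by apply T_ge1.
destruct (Rle_dec K 0); [|lra].
assert (K * norm1 st (fun x => mx_apply st B (fun _ => 1) x - r * 1) <= 0) by nra.
lra.
Qed.

(** Apply the bounded inverse of [B - r] to the truncated resolvent sum
    [s_N = sum_(n<N) W n / r^n], for which [(B - r) s_N] telescopes. *)
Lemma normalized_resolvent_bound r K (Hr : 0 < r) (HK : inverse_bound st B r K) N :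
  psum N (fun n => T n / r ^ n) <= K * (r * (T N / r ^ N + T 0%nat)).
Proof.
assert (Hrn : forall n, 0 < r ^ n) by (intros; apply pow_lt; lra).
assert (Htele : forall N x,
  psum N (fun n => W (S n) x / r ^ n) - r * psum N (fun n => W n x / r ^ n)
  = r * (W N x / r ^ N - W 0%nat x)).
{ intros M x; induction M as [|M IH]; simpl; [field|].
  assert (r ^ M <> 0) by (specialize (Hrn M); lra).
  transitivity ((psum M (fun n => W (S n) x / r ^ n) - r * psum M (fun n => W n x / r ^ n))
                + W (S M) x / r ^ M - r * (W M x / r ^ M)); [ring|].
  rewrite IH; field; lra. }
set (s := fun x => psum N (fun n => W n x / r ^ n)).
assert (Hs_norm : norm1 st s = psum N (fun n => T n / r ^ n)).
{ unfold norm1; rewrite (sumR_ext _ _ s).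
  2:{ intros x _; apply Rabs_right, Rle_ge, psum_nonneg; intros n.
      apply Rmult_le_pos; [auto|left; apply Rinv_0_lt_compat; auto]. }
  unfold s; rewrite sumR_psum; apply psum_ext; intros n _.
  unfold T, Rdiv; rewrite Rmult_comm, <- sumR_scal; apply sumR_ext; intros; ring. }
assert (Hs_tele : forall x, In x st ->
  mx_apply st B s x - r * s x = r * (W N x / r ^ N - W 0%nat x)).
{ intros x Hx; rewrite <- Htele; f_equal.
  unfold mx_apply, s.
  rewrite (sumR_ext _ _ (fun y => psum N (fun n => B x y * (W n y / r ^ n))))
    by (intros; rewrite psum_scal; reflexivity).
  rewrite sumR_psum; apply psum_ext; intros n _.
  rewrite W_S by assumption; unfold mx_apply, Rdiv.
  rewrite Rmult_comm, <- sumR_scal; apply sumR_ext; intros; ring. }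
rewrite <- Hs_norm.
assert (HK0 := inverse_bound_pos r K HK).
eapply Rle_trans; [apply HK|]; apply Rmult_le_compat_l; [lra|].
apply Rle_trans with (sumR st (fun x => r * (W N x / r ^ N + W 0%nat x))).
- apply sumR_le; intros x Hx; rewrite Hs_tele by assumption.
  assert (0 <= W N x / r ^ N)
    by (unfold Rdiv; apply Rmult_le_pos; [auto|left; apply Rinv_0_lt_compat; auto]).
  specialize (W_ge0 0%nat x); apply Rabs_le; split; nra.
- rewrite sumR_scal, sumR_plus; unfold T, Rdiv at 2.
  rewrite (Rmult_comm _ (/ r ^ N)), <- sumR_scal.
  right; do 2 f_equal; apply sumR_ext; intros; unfold Rdiv; ring.
Qed.

Lemma normalized_subexp r rho m : 0 < r -> 1 <= rho -> (1 <= m)%nat ->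
  (forall n, r ^ n <= T n) -> T m <= (r * rho) ^ m ->
  forall N, T N / r ^ N <= psum m (fun n => T n / r ^ n) * rho ^ N.
Proof.
intros Hr Hrho Hm Hlow HTm N.
set (a := fun n => T n / r ^ n); fold (a N).
assert (Hrn : forall n, 0 < r ^ n) by (intros; apply pow_lt; lra).
assert (Ha0 : forall n, 0 <= a n).
{ intros n; unfold a, Rdiv; apply Rmult_le_pos; [left; apply T_pos|].
  left; apply Rinv_0_lt_compat; auto. }
set (k := (N / m)%nat); set (j := (N mod m)%nat).
assert (HN : N = (k * m + j)%nat) by (unfold k, j; rewrite (Nat.div_mod_eq N m) at 1; lia).
assert (Hj : (j < m)%nat) by (apply Nat.mod_upper_bound; lia).
assert (Haj : a j <= psum m a) by (apply psum_term; auto).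
assert (HTN : T N <= r ^ (k * m) * rho ^ (k * m) * T j).
{ rewrite <- Rpow_mult_distr, HN, Nat.mul_comm, pow_mult.
  eapply Rle_trans; [rewrite Nat.mul_comm; apply T_mul_add_le|].
  apply Rmult_le_compat_r; [left; apply T_pos|].
  apply pow_incr; split; [left; apply T_pos|assumption]. }
assert (HaN : a N <= rho ^ (k * m) * a j).
{ unfold a; replace (r ^ N) with (r ^ (k * m) * r ^ j) by (rewrite HN, pow_add; ring).
  assert (0 < r ^ (k * m)) by auto; assert (0 < r ^ j) by auto.
  apply Rle_trans with (r ^ (k * m) * rho ^ (k * m) * T j / (r ^ (k * m) * r ^ j)).
  - apply Rmult_le_compat_r; [left; apply Rinv_0_lt_compat; nra|exact HTN].
  - right; field; lra. }
assert (1 <= rho ^ j) by (apply pow_R1_Rle; auto).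
assert (0 < rho ^ (k * m)) by (apply pow_lt; lra).
assert (0 <= a j) by apply Ha0.
replace (rho ^ N) with (rho ^ (k * m) * rho ^ j) by (rewrite HN, pow_add; ring).
assert (rho ^ (k * m) * a j <= rho ^ (k * m) * psum m a)
  by (apply Rmult_le_compat_l; lra).
assert (0 <= rho ^ (k * m) * psum m a) by nra.
nra.
Qed.

Lemma no_inverse_bound_at_growth_rate r K : 0 < r ->
  (forall n, r ^ n <= T n) ->
  (forall rho, 1 < rho -> exists m, (1 <= m)%nat /\ T m <= (r * rho) ^ m) ->
  ~ inverse_bound st B r K.
Proof.
intros Hr Hlow Hup HK.
set (a := fun n => T n / r ^ n).
assert (Ha1 : forall n, 1 <= a n).
{ intros n; unfold a; assert (0 < r ^ n) by (apply pow_lt; lra).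
  specialize (Hlow n); apply (Rmult_le_reg_r (r ^ n)); [lra|].
  unfold Rdiv; rewrite Rmult_assoc, Rinv_l; lra. }
assert (HKpos := inverse_bound_pos r K HK).
set (Q := K * r); assert (HQ : 0 < Q) by (unfold Q; nra).
set (c := / (2 * Q)); assert (Hc : 0 < c) by (unfold c; apply Rinv_0_lt_compat; lra).
set (rho := 1 + c / 2).
destruct (Hup rho ltac:(unfold rho; lra)) as [m [Hm HTm]].
assert (HT0 := T_ge1 0%nat); fold (T 0%nat) in HT0.
destruct (INR_unbounded (2 * Q * T 0%nat + 1)) as [N0 HN0].
apply (partial_sum_domination_growth a c (psum m a) rho N0).
- intros n; specialize (Ha1 n); lra.
- exact Hc.
- intros N HN.
  assert (HP := normalized_resolvent_bound r K Hr HK N); fold a (a N) in HP.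
  assert (INR N0 <= psum N a)
    by (eapply Rle_trans; [apply le_INR, HN|apply psum_ge; auto]).
  assert (psum N a <= 2 * Q * a N)
    by (assert (K * (r * (a N + T 0%nat)) = Q * a N + Q * T 0%nat) by (unfold Q; ring);
        nra).
  unfold c; apply (Rmult_le_reg_l (2 * Q)); [lra|].
  rewrite <- Rmult_assoc, Rinv_r, Rmult_1_l; lra.
- eapply Rle_trans; [|apply psum_ge; auto]; nra.
- apply normalized_subexp; auto; unfold rho; lra.
- unfold rho; lra.
- unfold rho; lra.
Qed.

Lemma growth_rate_le_perron lam :
  (forall r f, 0 <= r -> real_eigvec st B r f -> r <= lam) ->
  (forall r, (exists f, real_eigvec st B r f) \/ exists K, inverse_bound st B r K) ->
  forall eps, 0 < eps -> exists m, (1 <= m)%nat /\ ln (T m) / INR m < ln lam + eps.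
Proof.
intros Hlam Halt.
destruct (inf_log_growth T T_ge1) as [l [Hl0 [Hlm Hlt]]].
enough (Hll : l <= ln lam).
{ intros eps Heps; destruct (Hlt eps Heps) as [m [Hm1 Hm2]]; exists m; split; auto; lra. }
set (r := exp l).
assert (Hr1 : 1 <= r) by (unfold r; pose proof (exp_ineq1_le l); lra).
assert (Hrl : ln r = l) by (unfold r; apply ln_exp).
assert (Hlow : forall n, r ^ n <= T n).
{ intros [|n]; [apply T_ge1|].
  apply ln_le_inv; [apply pow_lt; lra|apply T_pos|].
  rewrite ln_pow, Hrl by lra; specialize (Hlm (S n) ltac:(lia)).
  assert (0 < INR (S n)) by (apply lt_0_INR; lia).
  replace (ln (T (S n))) with (INR (S n) * (ln (T (S n)) / INR (S n))) by (field; lra).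
  apply Rmult_le_compat_l; lra. }
assert (Hup : forall rho, 1 < rho -> exists m, (1 <= m)%nat /\ T m <= (r * rho) ^ m).
{ intros rho Hrho.
  destruct (Hlt (ln rho)) as [m [Hm1 Hm2]]; [rewrite <- ln_1; apply ln_increasing; lra|].
  exists m; split; auto.
  apply ln_le_inv; [apply T_pos|apply pow_lt; nra|].
  rewrite ln_pow, ln_mult, Hrl by nra.
  assert (0 < INR m) by (apply lt_0_INR; lia).
  replace (ln (T m)) with (INR m * (ln (T m) / INR m)) by (field; lra).
  apply Rmult_le_compat_l; lra. }
destruct (Halt r) as [[f Hf]|[K HK]].
- rewrite <- Hrl; apply ln_le; [lra|apply (Hlam r f); auto; lra].
- exfalso; apply (no_inverse_bound_at_growth_rate r K); auto; lra.
Qed.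
End WalkGrowth.

(** * A greedy zero-error code *)

Fixpoint qwords (q n : nat) : list (list nat) :=
  match n with
  | O => [[]]
  | S n => flat_map (fun l => map (fun a => a :: l) (seq 0 q)) (qwords q n)
  end.

Lemma qwords_In q n c :
  In c (qwords q n) <-> length c = n /\ Forall (fun a => (a < q)%nat) c.
Proof.
revert c; induction n as [|n IH]; intros c; simpl.
- split; [intros [<-|[]]; auto|intros [H _]; destruct c; [auto|discriminate]].
- rewrite in_flat_map; split.
  + intros [l [Hl Hc]]; apply in_map_iff in Hc; destruct Hc as [a [<- Ha]].
    apply in_seq in Ha; apply IH in Hl; destruct Hl as [H1 H2].
    simpl; split; [lia|constructor; [lia|auto]].
  + intros [H1 H2]; destruct c as [|a c]; [discriminate|].
    inversion H2; subst; exists c; split.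
    * apply IH; split; [simpl in H1; lia|auto].
    * apply in_map_iff; exists a; split; [reflexivity|apply in_seq; lia].
Qed.

Lemma NoDup_qwords q n : NoDup (qwords q n).
Proof.
induction n as [|n IH]; simpl; [constructor; [simpl; auto|constructor]|].
induction IH as [|l L Hl HL IHL]; simpl; [constructor|].
apply NoDup_app; auto.
- apply NoDup_map_NoDup_ForallPairs; [|apply seq_NoDup].
  intros x y _ _ E; injection E; auto.
- intros x Hx Hx'; apply in_map_iff in Hx; destruct Hx as [a [<- _]].
  apply in_flat_map in Hx'; destruct Hx' as [l' [Hl' Hx']].
  apply in_map_iff in Hx'; destruct Hx' as [b [E _]]; injection E as _ ->; contradiction.
Qed.

Lemma length_flat_map_const {A B : Type} (g : A -> list B) k L :
  (forall l, length (g l) = k) -> length (flat_map g L) = (k * length L)%nat.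
Proof. intros H; induction L; simpl; [lia|]. rewrite length_app, H, IHL; lia. Qed.

Lemma length_qwords q n : length (qwords q n) = (q ^ n)%nat.
Proof.
induction n as [|n IH]; simpl; auto.
rewrite (length_flat_map_const _ q), IH; [lia|].
intros; rewrite length_map, length_seq; reflexivity.
Qed.

Fixpoint agree (c1 c2 : list nat) (v : list bool) : bool :=
  match c1, c2, v with
  | a :: c1', b :: c2', e :: v' => (e || Nat.eqb a b) && agree c1' c2' v'
  | _, _, _ => true
  end.

Lemma agree_sym c1 c2 v : agree c1 c2 v = agree c2 c1 v.
Proof.
revert c2 v; induction c1 as [|a c1 IH]; intros [|b c2] [|e v]; simpl; auto.
rewrite IH, Nat.eqb_sym; reflexivity.
Qed.

Lemma agree_refl c v : agree c c v = true.
Proof.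
revert v; induction c as [|a c IH]; intros [|e v]; simpl; auto.
rewrite IH, Nat.eqb_refl, orb_true_r; reflexivity.
Qed.

Lemma output_eq_agree v1 : forall c1 c2 v2,
  length c1 = length v1 -> length c2 = length v2 -> length v1 = length v2 ->
  output c1 v1 = output c2 v2 -> v1 = v2 /\ agree c1 c2 v1 = true.
Proof.
induction v1 as [|e1 v1 IH]; intros c1 c2 v2 H1 H2 H3 H.
- destruct v2; [|discriminate]; destruct c1; destruct c2; simpl; auto.
- destruct v2 as [|e2 v2]; [discriminate|].
  destruct c1 as [|a1 c1]; [discriminate|]; destruct c2 as [|a2 c2]; [discriminate|].
  simpl in *; unfold output in H; simpl in H; injection H as Hh Ht.
  destruct (IH c1 c2 v2 ltac:(lia) ltac:(lia) ltac:(lia) Ht) as [-> Ha].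
  destruct e1; destruct e2; simpl in Hh; try discriminate; [split; auto|].
  injection Hh as ->; rewrite Nat.eqb_refl; split; auto.
Qed.

Lemma count_eqb_seq q a : (a < q)%nat ->
  length (filter (fun b => Nat.eqb a b) (seq 0 q)) = 1%nat.
Proof.
intros Ha; replace q with (a + 1 + (q - a - 1))%nat by lia.
rewrite !seq_app, !filter_app, !length_app; simpl; rewrite Nat.eqb_refl.
rewrite (filter_ext_in _ (fun _ => false) (seq 0 a)),
  (filter_ext_in _ (fun _ => false) (seq (0 + (a + 1)) _)), !filter_false; [simpl; lia|..];
  intros b Hb; apply in_seq in Hb; apply Nat.eqb_neq; lia.
Qed.

Lemma length_filter_cons_map (s : list nat) (P : nat -> bool) (Q : list nat -> bool) l :
  length (filter (fun c => match c with b :: l0 => P b && Q l0 | [] => false end)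
   (map (fun b => b :: l) s)) = if Q l then length (filter P s) else 0%nat.
Proof.
destruct (Q l) eqn:EQ; induction s as [|b s IHs]; simpl; auto.
- rewrite EQ, andb_true_r; destruct (P b); simpl; rewrite IHs; auto.
- rewrite EQ, andb_false_r; exact IHs.
Qed.

Lemma length_filter_cons_flat (L : list (list nat)) (s : list nat) (P : nat -> bool)
  (Q : list nat -> bool) :
  length (filter (fun c => match c with b :: l => P b && Q l | [] => false end)
     (flat_map (fun l => map (fun b => b :: l) s) L)) =
  (length (filter P s) * length (filter Q L))%nat.
Proof.
induction L as [|l L IH]; simpl; [lia|].
rewrite filter_app, length_app, IH, length_filter_cons_map; destruct (Q l); simpl; lia.
Qed.

Lemma count_agree q n : forall f v, In f (qwords q n) -> length v = n ->
  length (filter (fun c => agree f c v) (qwords q n)) = (q ^ ones v)%nat.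
Proof.
induction n as [|n IH]; intros f v Hf Hv.
- destruct v; [|discriminate]; destruct Hf as [<-|[]]; reflexivity.
- destruct v as [|e v]; [discriminate|]; simpl in Hv.
  apply qwords_In in Hf; destruct Hf as [Hf1 Hf2].
  destruct f as [|a f]; [discriminate|]; inversion Hf2; subst; simpl qwords.
  rewrite (filter_ext_in _ (fun c => match c with
     | b :: l => (e || Nat.eqb a b) && agree f l v | [] => false end)).
  2:{ intros c Hc; apply in_flat_map in Hc; destruct Hc as [l [_ Hc]].
      apply in_map_iff in Hc; destruct Hc as [b [<- _]]; reflexivity. }
  rewrite length_filter_cons_flat, IH; [|apply qwords_In; split; auto; simpl in Hf1; lia|lia].
  destruct e; simpl; [rewrite filter_true, length_seq; reflexivity|].
  rewrite count_eqb_seq by assumption; unfold ones; simpl; lia.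
Qed.

Lemma length_filter_existsb {A X : Type} (g : X -> A -> bool) (Xs : list X) (L : list A) :
  (length (filter (fun c => existsb (fun x => g x c) Xs) L) <=
   list_sum (map (fun x => length (filter (g x) L)) Xs))%nat.
Proof.
induction Xs as [|x Xs IH]; simpl; [rewrite filter_false; simpl; lia|].
enough (length (filter (fun c => g x c || existsb (fun x => g x c) Xs) L) <=
        length (filter (g x) L) + length (filter (fun c => existsb (fun x => g x c) Xs) L))%nat
  by lia.
clear IH; induction L as [|a L IH]; simpl; [lia|].
destruct (g x a); destruct (existsb (fun x => g x a) Xs); simpl; lia.
Qed.

Lemma list_sum_le {X : Type} (h : X -> nat) b Xs : (forall x, In x Xs -> (h x <= b)%nat) ->
  (list_sum (map h Xs) <= length Xs * b)%nat.
Proof.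
induction Xs as [|x Xs IH]; intros H; simpl; [lia|].
assert (h x <= b)%nat by auto with datatypes.
assert (list_sum (map h Xs) <= length Xs * b)%nat by (apply IH; auto with datatypes).
lia.
Qed.

Section Greedy.
Variable conf : list nat -> list nat -> bool.
Hypothesis conf_sym : forall a b, conf a b = conf b a.

Fixpoint greedy (L F : list (list nat)) : list (list nat) :=
  match L with
  | [] => F
  | c :: L' => greedy L' (if existsb (conf c) F then F else c :: F)
  end.

Definition conflict_free (F : list (list nat)) : Prop :=
  forall f1 f2, In f1 F -> In f2 F -> f1 <> f2 -> conf f1 f2 = false.

Hypothesis conf_refl : forall a, conf a a = true.

Lemma greedy_spec L : forall F, NoDup L -> (forall f, In f F -> ~ In f L) -> NoDup F ->
  conflict_free F ->
  NoDup (greedy L F) /\ conflict_free (greedy L F) /\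
  (forall g, In g (greedy L F) -> In g F \/ In g L) /\
  (forall c, In c L -> existsb (conf c) (greedy L F) = true) /\
  (forall f, In f F -> In f (greedy L F)).
Proof.
induction L as [|c L IH]; intros F HL HFL HF HP; simpl; [repeat split; auto; intros ? []|].
inversion HL as [|c' L' HcL HL']; subst.
destruct (existsb (conf c) F) eqn:Ex.
- destruct (IH F HL' ltac:(intros f Hf Hf'; apply (HFL f Hf); right; auto) HF HP)
    as [G1 [G2 [G3 [G4 G5]]]].
  repeat split; auto.
  + intros g Hg; destruct (G3 g Hg); auto.
  + intros c0 [<-|Hc0]; auto.
    apply existsb_exists in Ex; destruct Ex as [f [Hf Hcf]].
    apply existsb_exists; exists f; split; auto.
- assert (HcF : ~ In c F) by (intros H; apply (HFL c H); left; auto).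
  assert (Hno : forall f, In f F -> conf c f = false).
  { intros f Hf; destruct (conf c f) eqn:E; auto.
    assert (existsb (conf c) F = true) by (apply existsb_exists; exists f; auto).
    congruence. }
  destruct (IH (c :: F) HL') as [G1 [G2 [G3 [G4 G5]]]].
  + intros f [<-|Hf] Hf'; [contradiction|]; apply (HFL f Hf); right; auto.
  + constructor; auto.
  + intros f1 f2 [<-|H1] [<-|H2] Hne; auto; [congruence|rewrite conf_sym; auto].
  + repeat split; auto.
    * intros g Hg; destruct (G3 g Hg) as [[<-|Hh]|Hh]; auto.
    * intros c0 [<-|Hc0]; auto.
      apply existsb_exists; exists c; split; auto; apply G5; left; auto.
    * intros f Hf; apply G5; right; auto.
Qed.

Lemma covered_length_le L F : (forall c, In c L -> existsb (conf c) F = true) ->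
  (length L <= list_sum (map (fun f => length (filter (conf f) L)) F))%nat.
Proof.
intros H.
rewrite <- (forallb_filter_id (fun c => existsb (fun f => conf f c) F) L) at 1.
- apply length_filter_existsb.
- apply forallb_forall; intros c Hc; rewrite <- (H c Hc).
  clear H Hc; induction F as [|f F IHF]; simpl; auto; rewrite conf_sym, IHF; auto.
Qed.
End Greedy.

Definition noise_words (w d n : nat) : list (list bool) :=
  filter (fun v => existsb (fun s => valid_from d s v) (states w d)) (all_words n).

Lemma noise_words_In w d n v : In v (noise_words w d n) <->
  length v = n /\ exists s, In s (states w d) /\ valid_from d s v = true.
Proof. unfold noise_words; rewrite filter_In, all_words_In, existsb_exists; tauto. Qed.

Lemma admissible_noise_words w d n v (hw : (1 <= w)%nat) :
  admissible w d n v -> In v (noise_words w d n).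
Proof.
intros Hv; apply noise_words_In; split; [apply Hv|].
apply (admissible_valid_from w d n v hw Hv).
Qed.

Lemma length_noise_words_le w d n :
  INR (length (noise_words w d n)) <= sumR (states w d) (fun s => INR (nwalks d s n)).
Proof.
unfold noise_words; rewrite <- INR_list_sum; apply le_INR.
apply (length_filter_existsb (fun s v => valid_from d s v)).
Qed.

Definition confusable (w d n : nat) (c1 c2 : list nat) : bool :=
  existsb (agree c1 c2) (noise_words w d n).

Lemma confusable_sym w d n c1 c2 : confusable w d n c1 c2 = confusable w d n c2 c1.
Proof.
unfold confusable; induction (noise_words w d n) as [|v V IH]; simpl; auto.
rewrite agree_sym, IH; reflexivity.
Qed.

Lemma confusable_refl w d n c (hw : (1 <= w)%nat) : confusable w d n c c = true.
Proof.
apply existsb_exists; exists (repeat false n); split; [|apply agree_refl].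
apply noise_words_In; split; [apply repeat_length|].
exists (repeat false w); split; [apply repeat_false_state|apply valid_from_repeat_false; auto].
Qed.

Lemma conflict_free_zero_error q w d n F (hw : (1 <= w)%nat) :
  NoDup F -> (forall c, In c F -> In c (qwords q n)) ->
  conflict_free (confusable w d n) F -> zero_error_code q w d n F.
Proof.
intros HF Hq Hfree; split; [exact HF|split].
- intros c Hc; apply qwords_In, Hq, Hc.
- intros c1 c2 v1 v2 Hc1 Hc2 Hv1 Hv2 Ho.
  destruct (list_eq_dec Nat.eq_dec c1 c2) as [|Hne]; auto; exfalso.
  destruct (proj1 (qwords_In q n c1) (Hq c1 Hc1)) as [Hl1 _].
  destruct (proj1 (qwords_In q n c2) (Hq c2 Hc2)) as [Hl2 _].
  assert (length v1 = n) by apply Hv1; assert (length v2 = n) by apply Hv2.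
  destruct (output_eq_agree v1 c1 c2 v2 ltac:(lia) ltac:(lia) ltac:(lia) Ho) as [<- Hag].
  assert (Hconf : confusable w d n c1 c2 = true)
    by (apply existsb_exists; exists v1; split; auto; apply admissible_noise_words; auto).
  rewrite (Hfree c1 c2 Hc1 Hc2 Hne) in Hconf; discriminate.
Qed.

Lemma confusable_class_size q w d k f (hq : (1 <= q)%nat) (hw : (1 <= w)%nat) :
  In f (qwords q (k * w)) ->
  (length (filter (confusable w d (k * w) f) (qwords q (k * w))) <=
   length (noise_words w d (k * w)) * q ^ (k * d))%nat.
Proof.
intros Hf.
eapply Nat.le_trans; [apply (length_filter_existsb (fun v c => agree f c v))|].
apply list_sum_le; intros v Hv; apply noise_words_In in Hv.
destruct Hv as [Hv [s [Hs Hvs]]]; apply states_In in Hs.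
rewrite count_agree by auto.
apply Nat.pow_le_mono_r; [lia|]; apply (valid_from_ones w d hw k v s); tauto.
Qed.

Lemma greedy_code q w d k (hq : (1 <= q)%nat) (hw : (1 <= w)%nat) : exists F,
  zero_error_code q w d (k * w) F /\
  (q ^ (k * w) <= length F * (length (noise_words w d (k * w)) * q ^ (k * d)))%nat.
Proof.
set (n := (k * w)%nat); set (conf := confusable w d n).
destruct (greedy_spec conf (confusable_sym w d n) (fun c => confusable_refl w d n c hw)
  (qwords q n) [] (NoDup_qwords q n) ltac:(intros f []) (NoDup_nil _)
  ltac:(intros f1 f2 [])) as [G1 [G2 [G3 [G4 _]]]].
set (F := greedy conf (qwords q n) []) in *.
assert (HFq : forall c, In c F -> In c (qwords q n)) by (intros c Hc; destruct (G3 c Hc) as [[]|]; auto).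
exists F; split; [apply conflict_free_zero_error; auto|].
rewrite <- length_qwords.
eapply Nat.le_trans; [apply (covered_length_le conf (confusable_sym w d n) _ F G4)|].
apply list_sum_le; intros f Hf; apply confusable_class_size; auto.
Qed.

(** * The periodic erasure pattern *)

Fixpoint outputs (q : nat) (v : list bool) : list (list (option nat)) :=
  match v with
  | [] => [[]]
  | true :: v' => map (cons None) (outputs q v')
  | false :: v' => flat_map (fun o => map (fun a => Some a :: o) (seq 0 q)) (outputs q v')
  end.

Definition zeros (v : list bool) : nat := length (filter negb v).

Lemma ones_zeros v : (ones v + zeros v = length v)%nat.
Proof. induction v as [|[] v IH]; unfold ones, zeros in *; simpl; lia. Qed.

Lemma length_outputs q v : length (outputs q v) = (q ^ zeros v)%nat.
Proof.
induction v as [|[] v IH]; simpl; auto; [rewrite length_map; auto|].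
rewrite (length_flat_map_const _ q), IH; [unfold zeros; simpl; lia|].
intros; rewrite length_map, length_seq; auto.
Qed.

Lemma output_In_outputs q v : forall c, length c = length v ->
  Forall (fun a => (a < q)%nat) c -> In (output c v) (outputs q v).
Proof.
induction v as [|e v IH]; intros c Hl Hf; [destruct c; [left; reflexivity|discriminate]|].
destruct c as [|a c]; [discriminate|]; inversion Hf; subst; simpl in Hl.
unfold output; simpl; fold (output c v).
destruct e; simpl; [apply in_map, IH; auto|].
apply in_flat_map; exists (output c v); split; [apply IH; auto|].
apply in_map_iff; exists a; split; auto; apply in_seq; lia.
Qed.

Lemma firstn_seq k : forall a m, firstn k (seq a m) = seq a (Nat.min k m).
Proof.
induction k as [|k IH]; intros a m; simpl; [reflexivity|].
destruct m; simpl; [reflexivity|]; rewrite IH; reflexivity.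
Qed.

Section Periodic.
Variables w d : nat.
Hypothesis hw : (1 <= w)%nat.
Hypothesis hd : (d <= w)%nat.

Definition periodic (k : nat) : bool := Nat.ltb (k mod w) d.

Definition nperiodic (a m : nat) : nat := length (filter periodic (seq a m)).

Lemma nperiodic_S a m :
  nperiodic a (S m) = ((if periodic a then 1 else 0) + nperiodic (S a) m)%nat.
Proof. unfold nperiodic; simpl; destruct (periodic a); reflexivity. Qed.

Lemma nperiodic_add a m1 m2 :
  nperiodic a (m1 + m2) = (nperiodic a m1 + nperiodic (a + m1) m2)%nat.
Proof. unfold nperiodic; rewrite seq_app, filter_app, length_app; reflexivity. Qed.

Lemma periodic_add_w k : periodic (k + w) = periodic k.
Proof.
unfold periodic; f_equal; replace (k + w)%nat with (k + 1 * w)%nat by lia.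
apply Nat.Div0.mod_add.
Qed.

Lemma nperiodic_first n : (n <= w)%nat -> nperiodic 0 n = Nat.min n d.
Proof.
induction n as [|n IH]; intros Hn; [reflexivity|].
replace (S n) with (n + 1)%nat by lia; rewrite nperiodic_add, IH by lia.
unfold nperiodic; simpl; unfold periodic; rewrite Nat.mod_small by lia.
destruct (Nat.ltb n d) eqn:E; simpl; [apply Nat.ltb_lt in E|apply Nat.ltb_ge in E]; lia.
Qed.

Lemma nperiodic_window a : nperiodic a w = d.
Proof.
induction a as [|a IH]; [rewrite nperiodic_first by lia; lia|].
assert (E : nperiodic a (w + 1) = nperiodic a (S w)) by (f_equal; lia).
rewrite nperiodic_add, (nperiodic_S a w) in E.
assert (E2 : nperiodic (a + w) 1 = if periodic a then 1%nat else 0%nat)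
  by (unfold nperiodic; simpl; rewrite periodic_add_w; destruct (periodic a); reflexivity).
rewrite E2 in E; destruct (periodic a); lia.
Qed.

Lemma nperiodic_shift a m : nperiodic (a + w) m = nperiodic a m.
Proof.
revert a; induction m as [|m IH]; intros a; [reflexivity|].
rewrite !nperiodic_S, periodic_add_w.
replace (S (a + w)) with (S a + w)%nat by lia; rewrite IH; reflexivity.
Qed.

Lemma nperiodic_le a m : (m <= w)%nat -> (nperiodic a m <= d)%nat.
Proof.
intros H; rewrite <- (nperiodic_window a).
replace (nperiodic a w) with (nperiodic a (m + (w - m))) by (f_equal; lia).
rewrite nperiodic_add; lia.
Qed.

Lemma nperiodic_lower n : (n * d <= w * nperiodic 0 n)%nat.
Proof.
induction n as [n IH] using lt_wf_ind.
destruct (Nat.le_gt_cases n w) as [Hn|Hn].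
- rewrite nperiodic_first by lia.
  destruct (Nat.le_gt_cases n d); [rewrite Nat.min_l|rewrite Nat.min_r]; nia.
- replace n with (w + (n - w))%nat by lia.
  rewrite nperiodic_add, nperiodic_shift, nperiodic_window.
  specialize (IH (n - w)%nat ltac:(lia)); nia.
Qed.

Lemma periodic_admissible n : admissible w d n (map periodic (seq w n)).
Proof.
split; [rewrite length_map, length_seq; reflexivity|].
exists (map periodic (seq 0 w)); split; [rewrite length_map, length_seq; reflexivity|].
intros i Hi; rewrite <- map_app, <- seq_app.
rewrite skipn_map, firstn_map, ones_map, skipn_seq, firstn_seq.
apply nperiodic_le; lia.
Qed.

Lemma code_size_le_periodic q n F : zero_error_code q w d n F ->
  exists z, (length F <= q ^ z)%nat /\ (z * w <= n * (w - d))%nat.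
Proof.
intros [HND [HF Hz]].
set (vs := map periodic (seq w n)).
assert (Hadm : admissible w d n vs) by apply periodic_admissible.
assert (Hl : length vs = n) by (unfold vs; rewrite length_map, length_seq; reflexivity).
exists (zeros vs); split.
- rewrite <- length_outputs, <- (length_map (fun c => output c vs) F).
  apply NoDup_incl_length.
  + apply NoDup_map_NoDup_ForallPairs; auto.
    intros x y Hx Hy E; apply (Hz x y vs vs); auto.
  + intros o Ho; apply in_map_iff in Ho; destruct Ho as [c [<- Hc]].
    destruct (HF c Hc) as [Hlc Hq]; apply output_In_outputs; auto; lia.
- assert (H1 := ones_zeros vs).
  assert (Ho : ones vs = nperiodic 0 n).
  { unfold vs; rewrite ones_map; exact (nperiodic_shift 0 n). }
  assert (H2 := nperiodic_lower n).
  nia.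
Qed.
End Periodic.

Definition total_walks (w d n : nat) : R :=
  sumR (states w d) (fun s => INR (nwalks d s n)).

Lemma nwalks_0 d x : INR (nwalks d x 0) = 1.
Proof. reflexivity. Qed.

Lemma nwalks_S_mx w d (hw : (1 <= w)%nat) n x : In x (states w d) ->
  INR (nwalks d x (S n)) = mx_apply (states w d) adj (fun y => INR (nwalks d y n)) x.
Proof.
intros Hx; apply states_In in Hx; unfold mx_apply.
rewrite (sumR_adj w d hw x (fun y => INR (nwalks d y n))) by tauto.
rewrite nwalks_S, plus_INR.
destruct (Nat.leb (ones (step x false)) d); destruct (Nat.leb (ones (step x true)) d);
reflexivity.
Qed.

Lemma total_walks_ge1 w d (hw : (1 <= w)%nat) n : 1 <= total_walks w d n.
Proof.
unfold total_walks; eapply Rle_trans; [|apply (sumR_term _ _ (repeat false w))].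
- apply (le_INR 1), nwalks_repeat_false_pos; auto.
- intros; apply pos_INR.
- apply repeat_false_state.
Qed.

Lemma total_walks_mul_add_le w d (hw : (1 <= w)%nat) m k j :
  total_walks w d (k * m + j) <= total_walks w d m ^ k * total_walks w d j.
Proof.
exact (T_mul_add_le (states w d) adj (fun n s => INR (nwalks d s n)) adj_ge0
  (fun _ _ => pos_INR _) (fun x _ => nwalks_0 d x) (nwalks_S_mx w d hw)
  (total_walks_ge1 w d hw) m k j).
Qed.

Lemma total_walks_growth w d lam (hw : (1 <= w)%nat) : is_perron w d lam ->
  forall eps, 0 < eps ->
  exists m, (1 <= m)%nat /\ ln (total_walks w d m) / INR m < ln lam + eps.
Proof.
intros [Hl0 [_ Hmax]].
apply (growth_rate_le_perron (states w d) adj (fun n s => INR (nwalks d s n)) adj_ge0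
  (fun _ _ => pos_INR _) (fun x _ => nwalks_0 d x) (nwalks_S_mx w d hw)
  (total_walks_ge1 w d hw)).
- intros r f Hr [Hnz Heig].
  assert (Hev : is_eigenvalue w d r 0).
  { exists f, (fun _ => 0); split; [destruct Hnz as [x [Hx Hfx]]; exists x; auto|].
    intros x Hx; split; [unfold mx_apply in Heig; rewrite (Heig x Hx); ring|].
    rewrite (sumR_ext _ _ (fun y => 0 * adj x y)) by (intros; ring).
    rewrite sumR_scal; ring. }
  specialize (Hmax r 0 Hev); rewrite Rmult_0_l, Rplus_0_r, sqrt_square in Hmax; auto.
- intros r; apply EigenAlternative.real_eigvec_or_inverse_bound, NoDup_states.
Qed.

Lemma logq_le_of_le_pow q x z : (2 <= q)%nat -> 0 < x -> x <= INR q ^ z ->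
  logq q x <= INR z.
Proof.
intros hq Hx H.
assert (Hq : 1 < INR q) by (apply (lt_INR 1); lia).
assert (Hlq : 0 < ln (INR q)) by (rewrite <- ln_1; apply ln_increasing; lra).
unfold logq; apply (Rmult_le_reg_r (ln (INR q))); [auto|].
unfold Rdiv; rewrite Rmult_assoc, Rinv_l, Rmult_1_r, <- ln_pow by lra.
apply ln_le; auto.
Qed.

Lemma upper_rate q w d (hq : (2 <= q)%nat) (hw : (1 <= w)%nat) (hd : (d <= w)%nat) r :
  rates q w d r -> r <= 1 - INR d / INR w.
Proof.
intros [n [F [Hn [HF1 [HF ->]]]]].
destruct (code_size_le_periodic w d hw hd q n F HF) as [z [Hz1 Hz2]].
assert (HnR : 0 < INR n) by (apply lt_0_INR; lia).
assert (HwR : 0 < INR w) by (apply lt_0_INR; lia).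
assert (HA : logq q (INR (length F)) <= INR z).
{ apply logq_le_of_le_pow; auto; [apply lt_0_INR; lia|].
  rewrite <- pow_INR; apply le_INR; auto. }
assert (Hzw : INR z * INR w <= INR n * (INR w - INR d))
  by (rewrite <- minus_INR, <- !mult_INR by auto; apply le_INR; auto).
apply (Rmult_le_reg_r (INR n * INR w)); [nra|].
replace ((1 - INR d / INR w) * (INR n * INR w)) with (INR n * (INR w - INR d))
  by (field; lra).
replace (logq q (INR (length F)) / INR n * (INR n * INR w))
  with (logq q (INR (length F)) * INR w) by (field; lra).
nra.
Qed.

(** The walk count at length [k m w] is split into [k w] blocks of length [m]. *)
Lemma greedy_code_ln_size q w d k m (hq : (2 <= q)%nat) (hw : (1 <= w)%nat) :
  exists F, zero_error_code q w d (k * m * w) F /\ (1 <= length F)%nat /\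
    INR (k * m * w) * ln (INR q) <=
    ln (INR (length F)) + INR (k * w) * ln (total_walks w d m) +
    ln (total_walks w d 0) + INR (k * m) * INR d * ln (INR q).
Proof.
destruct (greedy_code q w d (k * m) ltac:(lia) hw) as [F [HF Hcount]].
set (N := (k * m * w)%nat) in *; set (V := length (noise_words w d N)) in *.
assert (HqN : (1 <= q ^ N)%nat) by (apply Nat.neq_0_lt_0, Nat.pow_nonzero; lia).
assert (HF1 : (1 <= length F)%nat) by (destruct (length F); simpl in Hcount; lia).
assert (HV1 : (1 <= V)%nat) by (destruct V; [rewrite Nat.mul_0_r in Hcount|]; lia).
exists F; split; [exact HF|split; [exact HF1|]].
assert (Hq : 0 < INR q) by (apply lt_0_INR; lia).
assert (HT : forall j, 0 < total_walks w d j)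
  by (intros j; pose proof (total_walks_ge1 w d hw j); lra).
assert (Hc : INR q ^ N <= INR (length F) * (INR V * INR q ^ (k * m * d))).
{ rewrite <- !pow_INR, <- !mult_INR; apply le_INR; auto. }
apply ln_le in Hc; [|apply pow_lt; lra].
rewrite !ln_mult, !ln_pow in Hc by (try apply Rmult_lt_0_compat; try apply pow_lt;
  try apply lt_0_INR; lia || lra).
rewrite mult_INR in Hc.
assert (HV : ln (INR V) <= ln (total_walks w d N))
  by (apply ln_le; [apply lt_0_INR; lia|apply length_noise_words_le]).
assert (HTN : total_walks w d N <= total_walks w d m ^ (k * w) * total_walks w d 0).
{ replace N with ((k * w) * m + 0)%nat by (unfold N; lia).
  apply total_walks_mul_add_le; auto. }
apply ln_le in HTN; [|apply HT].
rewrite ln_mult, ln_pow in HTN by (try apply pow_lt; apply HT).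
lra.
Qed.

Lemma greedy_code_ln_size_lower q w d k m lam eps (hq : (2 <= q)%nat) (hw : (1 <= w)%nat) :
  (1 <= m)%nat ->
  ln (total_walks w d m) / INR m < ln lam + eps ->
  ln (total_walks w d 0) < eps * INR (k * m * w) ->
  exists F, zero_error_code q w d (k * m * w) F /\ (1 <= length F)%nat /\
    INR (k * m * w) * (ln (INR q) - ln lam - 2 * eps) - INR k * INR m * INR d * ln (INR q)
    < ln (INR (length F)).
Proof.
intros Hm Hgrowth H0.
destruct (greedy_code_ln_size q w d k m hq hw) as [F [HF [HF1 Hsize]]].
exists F; split; [exact HF|split; [exact HF1|]].
assert (HmR : 0 < INR m) by (apply lt_0_INR; lia).
assert (Hm3 : ln (total_walks w d m) < INR m * (ln lam + eps)).
{ apply (Rmult_lt_compat_l (INR m)) in Hgrowth; auto.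
  replace (INR m * (ln (total_walks w d m) / INR m)) with (ln (total_walks w d m))
    in Hgrowth by (field; lra).
  lra. }
assert (Hkw : INR k * INR w * ln (total_walks w d m) <= INR k * INR w * (INR m * (ln lam + eps)))
  by (apply Rmult_le_compat_l; [apply Rmult_le_pos; apply pos_INR|lra]).
rewrite !mult_INR in Hsize, H0 |- *; rewrite mult_INR in Hsize.
lra.
Qed.

Lemma lower_rate q w d (hq : (2 <= q)%nat) (hw : (1 <= w)%nat) lam :
  is_perron w d lam -> forall delta, 0 < delta ->
  exists r, rates q w d r /\ 1 - INR d / INR w - logq q lam - delta < r.
Proof.
intros Hp delta Hdel.
assert (Hlq : 0 < ln (INR q))
  by (rewrite <- ln_1; apply ln_increasing; [lra|apply (lt_INR 1); lia]).
assert (HwR : 0 < INR w) by (apply lt_0_INR; lia).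
set (eps := delta * ln (INR q) / 3); assert (Heps : 0 < eps) by (unfold eps; nra).
destruct (total_walks_growth w d lam hw Hp eps Heps) as [m [Hm1 Hm2]].
assert (HmR : 0 < INR m) by (apply lt_0_INR; lia).
destruct (INR_unbounded (ln (total_walks w d 0) / (eps * INR m * INR w))) as [k0 Hk0].
set (k := S k0); set (N := (k * m * w)%nat).
assert (HNR : INR N = INR k * INR m * INR w) by (unfold N; rewrite !mult_INR; ring).
assert (HkR : INR k0 < INR k) by (apply lt_INR; unfold k; lia).
assert (Hk : 0 < INR k) by (apply lt_0_INR; unfold k; lia).
assert (HNpos : 0 < INR N) by (rewrite HNR; apply Rmult_lt_0_compat; [nra|lra]).
assert (HT0 : ln (total_walks w d 0) < eps * INR N).
{ assert (0 < eps * INR m * INR w) by (apply Rmult_lt_0_compat; [nra|auto]).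
  apply (Rmult_lt_compat_r (eps * INR m * INR w)) in Hk0; auto.
  replace (ln (total_walks w d 0) / (eps * INR m * INR w) * (eps * INR m * INR w))
    with (ln (total_walks w d 0)) in Hk0 by (field; lra).
  rewrite HNR; nra. }
destruct (greedy_code_ln_size_lower q w d k m lam eps hq hw Hm1 Hm2 HT0)
  as [F [HF [HF1 Hln]]]; fold N in HF, Hln.
exists (logq q (INR (length F)) / INR N); split.
{ exists N, F; split; [unfold N, k; nia|split; [exact HF1|split; [exact HF|reflexivity]]]. }
unfold logq; apply (Rmult_lt_reg_r (INR N * ln (INR q))); [nra|].
replace (ln (INR (length F)) / ln (INR q) / INR N * (INR N * ln (INR q)))
  with (ln (INR (length F))) by (field; lra).
replace ((1 - INR d / INR w - ln lam / ln (INR q) - delta) * (INR N * ln (INR q)))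
  with (INR N * (ln (INR q) - ln lam) - INR k * INR m * INR d * ln (INR q)
        - 3 * eps * INR N) by (unfold eps; rewrite HNR; field; lra).
nra.
Qed.

Theorem corollary1 (q w d : nat) (hq : (2 <= q)%nat) (hw : (1 <= w)%nat)
  (hd : (d <= w)%nat) (lam C0 : R) :
  is_perron w d lam ->
  is_lub (rates q w d) C0 ->
  1 - INR d / INR w - logq q lam <= C0 <= 1 - INR d / INR w.
Proof.
intros Hp [Hub Hleast]; split.
- destruct (Rle_dec (1 - INR d / INR w - logq q lam) C0) as [|Hn]; auto; exfalso.
  destruct (lower_rate q w d hq hw lam Hp (1 - INR d / INR w - logq q lam - C0))
    as [r [Hr1 Hr2]]; [lra|].
  specialize (Hub r Hr1); lra.
- apply Hleast; intros r Hr; exact (upper_rate q w d hq hw hd r Hr).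
Qed.
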